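(* Let $b>0$. For $R>0$ define, for $r>0$, \[ \begin{aligned} \underline u_{\rm out}(r) &= Lr^{-m} - br^{-l} \log \frac{r}{R},\\ \underline v_{\rm out}(r) &= m(n-2-m)Lr^{-m-2} +\Big[- l(n-2-l) \log \frac{r}{R} + (n-2-2l)\Big]br^{-l-2},\\ \underline w_{\rm out}(r) &= m(m+2)(n-2-m)(n-4-m)Lr^{-m-4} - l(l+2)(n-2-l)(n-4-l)br^{-l-4} \log \frac{r}{R} \\ &\qquad + (n-2-2l)(l+2)(n-4-l) b r^{-l-4}, \end{aligned} \] and \[ \underline r_1 = \sup\{ r>0 : \underline u_{\rm out}(r) \leqslant 0 \},\quad \underline r_2 = \sup\{ r>0 : \underline v_{\rm out}(r) \leqslant 0 \},\quad \underline r_3 = \sup\{ r>0 : \underline w_{\rm out}(r) \leqslant 0 \}. \] Then there exists $R>0$ such that $\underline r_1,\underline r_2,\underline r_3$ are well defined and \[ R<\underline r_1<\underline r_2<\underline r_3<+\infty . \]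
   Context: Let $n\geqslant 15$ and $p=p_{\mathsf{JL}}(6,n)$, where $p_{\mathsf{JL}}(6,n)=\frac{(n+4)\sqrt{3} - \sqrt{\sqrt[3]{K_0+K_1}+ \sqrt[3]{K_0-K_1} + 3n^2+32 }}{(n-8)\sqrt{3} - \sqrt{\sqrt[3]{K_0+K_1} + \sqrt[3]{K_0-K_1} + 3n^2+32 }}$ with $2K_0 =-27n^6+324 n^5-756n^4-2592 n^3 + 25776 n^2 +5184 n -23744$, $2K_1 = \sqrt{(2K_0)^2 - 4(192n^2+256)^3}$. Let $m=6/(p-1)$, $L=\big(m(m+2)(m+4)(n-2-m)(n-4-m)(n-6-m)\big)^{1/(p-1)}$, let $\lambda_3$ be the smallest positive root of $P(\lambda)=(m+\lambda)(m+\lambda+2)(m+\lambda+4)(n-2-m-\lambda)(n-4-m-\lambda)(n-6-m-\lambda)-pL^{p-1}$, and set $l=m+\lambda_3$. *)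

From Stdlib Require Import Reals Lra.
Open Scope R_scope.

Definition cbrt (x : R) : R :=
  if Rlt_dec 0 x then Rpower x (1/3)
  else if Rlt_dec x 0 then - Rpower (- x) (1/3) else 0.

Definition K0 (n : R) : R :=
  (-27*n^6 + 324*n^5 - 756*n^4 - 2592*n^3 + 25776*n^2 + 5184*n - 23744) / 2.
Definition K1 (n : R) : R :=
  sqrt ((2 * K0 n)^2 - 4 * (192*n^2 + 256)^3) / 2.

Definition pJL6 (n : R) : R :=
  let s := sqrt (cbrt (K0 n + K1 n) + cbrt (K0 n - K1 n) + 3*n^2 + 32) in
  ((n + 4) * sqrt 3 - s) / ((n - 8) * sqrt 3 - s).

Definition mexp (n : R) : R := 6 / (pJL6 n - 1).

Definition Lconst (n : R) : R :=
  let m := mexp n in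
  Rpower (m*(m+2)*(m+4)*(n-2-m)*(n-4-m)*(n-6-m)) (1 / (pJL6 n - 1)).

Definition Ppoly (n lam : R) : R :=
  let m := mexp n in
  (m+lam)*(m+lam+2)*(m+lam+4)*(n-2-m-lam)*(n-4-m-lam)*(n-6-m-lam)
  - pJL6 n * Rpower (Lconst n) (pJL6 n - 1).

Definition u_out (n l b R0 r : R) : R :=
  let m := mexp n in let L := Lconst n in
  L * Rpower r (- m) - b * Rpower r (- l) * ln (r / R0).

Definition v_out (n l b R0 r : R) : R :=
  let m := mexp n in let L := Lconst n in
  m*(n-2-m)*L*Rpower r (-m-2)
  + (- l*(n-2-l) * ln (r / R0) + (n-2-2*l)) * b * Rpower r (-l-2).

Definition w_out (n l b R0 r : R) : R :=
  let m := mexp n in let L := Lconst n in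
  m*(m+2)*(n-2-m)*(n-4-m)*L*Rpower r (-m-4)
  - l*(l+2)*(n-2-l)*(n-4-l)*b*Rpower r (-l-4) * ln (r / R0)
  + (n-2-2*l)*(l+2)*(n-4-l)*b*Rpower r (-l-4).

From Stdlib Require Import Reals Lra Psatz.
Open Scope R_scope.

(* Put r = R0 e^x and la = l - m > 0.  Normalising R0 by L R0^la = b e^(-la K),
   each of u_out, v_out, w_out becomes a negative multiple of a concave function
   a x - c - d e^(la (x - K)) with d > 0, so r_i = R0 e^(x_i) where x_i is the
   last zero of the i-th function.  At x1 the exponential equals x1, so the
   second function is affine there, with slope (l - m) (n - 2 - l - m); at x2 the
   exponential is fixed by the second equation, so the third function is, up to
   a positive factor, affine with slope proportional to (l - m) (n - 6 - l - m).
   Both slopes are positive: m < (n - 6) / 2 by Cardano's formula for p, and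
   l <= (n - 6) / 2 because P is nonnegative at the midpoint, so its first
   positive root comes earlier.  Taking K large then gives K <= x1 < x2 < x3. *)

Lemma Rpower_third_pow3 x : 0 < x -> Rpower x (1 / 3) ^ 3 = x.
Proof.
  intro Hx. rewrite <- Rpower_pow by apply exp_pos.
  rewrite Rpower_mult. replace (1 / 3 * INR 3) with 1 by (simpl; field).
  exact (Rpower_1 x Hx).
Qed.

Lemma cbrt_pow3 a : cbrt a ^ 3 = a.
Proof.
  unfold cbrt. destruct (Rlt_dec 0 a) as [Ha|Ha]; [exact (Rpower_third_pow3 a Ha)|].
  destruct (Rlt_dec a 0) as [Ha'|Ha']; [|simpl; lra].
  replace ((- Rpower (- a) (1 / 3)) ^ 3) with (- (Rpower (- a) (1 / 3) ^ 3)) by ring.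
  rewrite Rpower_third_pow3 by lra. ring.
Qed.

Lemma pow3_lt a c : a < c -> a ^ 3 < c ^ 3.
Proof.
  intro H.
  assert (E : c ^ 3 - a ^ 3 = (c - a) ^ 3 / 4 + 3 / 4 * (c - a) * (a + c) ^ 2) by field.
  assert (0 < (c - a) ^ 3) by (apply pow_lt; lra).
  assert (0 <= 3 / 4 * (c - a) * (a + c) ^ 2) by (apply Rmult_le_pos; [lra | apply pow2_ge_0]).
  lra.
Qed.

Lemma pow3_inj a c : a ^ 3 = c ^ 3 -> a = c.
Proof.
  intro H. destruct (Rtotal_order a c) as [Hac|[Hac|Hac]]; [|exact Hac|];
    apply pow3_lt in Hac; lra.
Qed.

Lemma cardano_sum k0 k1 x : k1 ^ 2 = k0 ^ 2 - x ^ 3 ->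
  let y := cbrt (k0 + k1) + cbrt (k0 - k1) in y ^ 3 - 3 * x * y = 2 * k0.
Proof.
  intros Hk y.
  assert (Huv : cbrt (k0 + k1) * cbrt (k0 - k1) = x).
  { apply pow3_inj. rewrite Rpow_mult_distr, !cbrt_pow3. lra. }
  transitivity (cbrt (k0 + k1) ^ 3 + cbrt (k0 - k1) ^ 3
                + 3 * (cbrt (k0 + k1) * cbrt (k0 - k1) - x) * y); [unfold y; ring|].
  rewrite Huv, !cbrt_pow3. ring.
Qed.

Lemma depressed_cubic_root_lt x c y y0 :
  y ^ 3 - 3 * x * y = c -> 4 * x < y0 ^ 2 -> c < y0 ^ 3 - 3 * x * y0 -> y < y0.
Proof.
  intros Hy Hx Hc.
  assert (Hf : (y - y0) * ((y + y0 / 2) ^ 2 + 3 / 4 * (y0 ^ 2 - 4 * x))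
               = c - (y0 ^ 3 - 3 * x * y0)) by (rewrite <- Hy; field).
  assert (0 <= (y + y0 / 2) ^ 2) by apply pow2_ge_0.
  nra.
Qed.

(* After the substitution N = c + k, the goal is a polynomial in k >= 0 whose
   coefficients are all nonnegative. *)
Ltac positivity_above c N :=
  let k := fresh "k" in let Hk := fresh "Hk" in
  assert (Hk : 0 <= N - c) by lra;
  replace N with (c + (N - c)) by ring;
  generalize (N - c) Hk; clear; intros k Hk; field_simplify;
  repeat (first [ lra | apply Rplus_le_lt_0_compat | apply Rplus_le_le_0_compat
                | apply Rmult_le_pos | apply pow_le ]).

Lemma K1_sq N : 15 <= N -> K1 N ^ 2 = K0 N ^ 2 - (192 * N ^ 2 + 256) ^ 3.
Proof.
  intro HN.
  assert (Hdisc : 0 <= (2 * K0 N) ^ 2 - 4 * (192 * N ^ 2 + 256) ^ 3)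
    by (unfold K0; positivity_above 15 N).
  unfold K1, Rdiv. rewrite Rpow_mult_distr, <- Rsqr_pow2, Rsqr_sqrt by exact Hdisc.
  field.
Qed.

(* The bracket y0 = 160 - 48 N is chosen so that y0 + 3 N^2 + 32 = 3 (N - 8)^2. *)
Lemma jl_cardano_sum_lt N : 15 <= N ->
  cbrt (K0 N + K1 N) + cbrt (K0 N - K1 N) < 160 - 48 * N.
Proof.
  intro HN. apply (depressed_cubic_root_lt (192 * N ^ 2 + 256) (2 * K0 N)).
  - exact (cardano_sum _ _ _ (K1_sq N HN)).
  - nra.
  - apply Rlt_0_minus. unfold K0. positivity_above 15 N.
Qed.

Lemma jl_sqrt_lt N : 15 <= N ->
  sqrt (cbrt (K0 N + K1 N) + cbrt (K0 N - K1 N) + 3 * N ^ 2 + 32) < (N - 8) * sqrt 3.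
Proof.
  intro HN. assert (Hy := jl_cardano_sum_lt N HN).
  set (z := cbrt (K0 N + K1 N) + cbrt (K0 N - K1 N) + 3 * N ^ 2 + 32).
  assert (H3 : 0 < sqrt 3) by (apply sqrt_lt_R0; lra).
  destruct (Rle_or_lt z 0) as [Hz|Hz].
  - rewrite sqrt_neg_0 by exact Hz. nra.
  - replace ((N - 8) * sqrt 3) with (sqrt ((N - 8) ^ 2 * 3))
      by (rewrite sqrt_mult, sqrt_pow2 by nra; lra).
    apply sqrt_lt_1; unfold z in *; nra.
Qed.

Lemma jl_exponent_bounds N s : 0 <= s < (N - 8) * sqrt 3 ->
  let p := ((N + 4) * sqrt 3 - s) / ((N - 8) * sqrt 3 - s) in
  1 < p /\ 0 < 6 / (p - 1) < (N - 6) / 2.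
Proof.
  intros Hs p. assert (H3 : 0 < sqrt 3) by (apply sqrt_lt_R0; lra).
  assert (Ep : p - 1 = 12 * sqrt 3 / ((N - 8) * sqrt 3 - s)) by (unfold p; field; lra).
  assert (Em : 6 / (p - 1) = ((N - 8) * sqrt 3 - s) / (2 * sqrt 3))
    by (rewrite Ep; field; lra).
  rewrite Em. split; [|split].
  - enough (0 < p - 1) by lra. rewrite Ep. apply Rdiv_lt_0_compat; lra.
  - apply Rdiv_lt_0_compat; lra.
  - apply Rmult_lt_reg_r with (2 * sqrt 3); [lra|].
    unfold Rdiv. rewrite Rmult_assoc, Rinv_l by lra. nra.
Qed.

Lemma pJL6_gt_1 N : 15 <= N -> 1 < pJL6 N.
Proof.
  intro HN. apply jl_exponent_bounds. split; [apply sqrt_pos | exact (jl_sqrt_lt N HN)].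
Qed.

Lemma mexp_bounds N : 15 <= N -> 0 < mexp N < (N - 6) / 2.
Proof.
  intro HN. apply jl_exponent_bounds. split; [apply sqrt_pos | exact (jl_sqrt_lt N HN)].
Qed.

Definition jl_poly (N s : R) : R :=
  s * (s + 2) * (s + 4) * (N - 2 - s) * (N - 4 - s) * (N - 6 - s).

Lemma jl_poly_pos N s : 0 < s < N - 6 -> 0 < jl_poly N s.
Proof. intro Hs. unfold jl_poly. repeat apply Rmult_lt_0_compat; lra. Qed.

(* With t = s (N - 6 - s) the polynomial is h t = t (t + 2N - 8) (t + 4N - 8) and
   t <= T, its value at the midpoint; h T - h t is (T - t) times a quadratic in t
   with nonpositive discriminant. *)
Lemma jl_poly_le_mid N s : 10 <= N -> jl_poly N s <= jl_poly N ((N - 6) / 2).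
Proof.
  intro HN. set (t := s * (N - 6 - s)). set (T := (N - 6) ^ 2 / 4).
  assert (E : jl_poly N ((N - 6) / 2) - jl_poly N s
              = (T - t) * ((t + (T + 6 * N - 16) / 2) ^ 2
                           + (3 * T ^ 2 + 2 * (6 * N - 16) * T - 4 * N ^ 2) / 4))
    by (unfold jl_poly, t, T; field).
  assert (HtT : T - t = (s - (N - 6) / 2) ^ 2) by (unfold T, t; field).
  assert (Hdisc : 0 <= 3 * T ^ 2 + 2 * (6 * N - 16) * T - 4 * N ^ 2)
    by (unfold T; positivity_above 10 N).
  enough (0 <= jl_poly N ((N - 6) / 2) - jl_poly N s) by lra.
  rewrite E, HtT. apply Rmult_le_pos; [apply pow2_ge_0|].
  pose proof (pow2_ge_0 (t + (T + 6 * N - 16) / 2)). lra.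
Qed.

Lemma Ppoly_eq N lam : 15 <= N ->
  Ppoly N lam = jl_poly N (mexp N + lam) - pJL6 N * jl_poly N (mexp N).
Proof.
  intro HN. assert (Hp := pJL6_gt_1 N HN).
  assert (HQ : 0 < jl_poly N (mexp N))
    by (apply jl_poly_pos; pose proof (mexp_bounds N HN); lra).
  assert (EL : Rpower (Lconst N) (pJL6 N - 1) = jl_poly N (mexp N)).
  { unfold Lconst. cbv zeta. rewrite Rpower_mult.
    replace (1 / (pJL6 N - 1) * (pJL6 N - 1)) with 1 by (field; lra).
    exact (Rpower_1 _ HQ). }
  unfold Ppoly. cbv zeta. rewrite EL. unfold jl_poly. ring.
Qed.

Lemma first_root_le_mid N lam3 : 15 <= N -> 0 < lam3 -> Ppoly N lam3 = 0 ->
  (forall lam, 0 < lam < lam3 -> Ppoly N lam <> 0) ->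
  mexp N + lam3 <= (N - 6) / 2.
Proof.
  intros HN Hl Hroot Hmin.
  destruct (mexp_bounds N HN) as [Hm Hmid]. assert (Hp := pJL6_gt_1 N HN).
  assert (HQ : 0 < jl_poly N (mexp N)) by (apply jl_poly_pos; lra).
  set (g := fun lam => jl_poly N (mexp N + lam) - pJL6 N * jl_poly N (mexp N)).
  assert (Eg : forall lam, Ppoly N lam = g lam) by (intro; apply Ppoly_eq, HN).
  set (d := (N - 6) / 2 - mexp N).
  assert (Hgd : 0 <= g d).
  { rewrite Eg in Hroot. unfold g, d in *.
    replace (mexp N + ((N - 6) / 2 - mexp N)) with ((N - 6) / 2) by ring.
    pose proof (jl_poly_le_mid N (mexp N + lam3) ltac:(lra)). lra. }
  apply Rnot_lt_le. intro Hlate.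
  assert (Hg0 : g 0 < 0) by (unfold g; rewrite Rplus_0_r; nra).
  assert (Hcont : continuity g) by (unfold g, jl_poly; reg).
  destruct (IVT_cor g 0 d Hcont ltac:(unfold d; lra) ltac:(nra)) as [z [Hz Hgz]].
  apply (Hmin z); [|rewrite Eg; exact Hgz].
  split; [|unfold d in *; lra].
  destruct Hz as [[Hz|Hz] _]; [exact Hz | subst z; lra].
Qed.

Definition greatest (P : R -> Prop) (x : R) : Prop := P x /\ forall y, P y -> y <= x.

Lemma continuity_pos_near f x : continuity f -> 0 < f x ->
  exists d, 0 < d /\ forall y, Rabs (y - x) < d -> 0 < f y.
Proof.
  intros Hc Hfx. destruct (Hc x (f x) Hfx) as [d [Hd Hnear]].
  exists d. split; [exact Hd|]. intros y Hy.
  destruct (Req_dec y x) as [->|Hyx]; [exact Hfx|].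
  assert (H : Rabs (f y - f x) < f x) by (apply Hnear; repeat split; auto).
  apply Rabs_def2 in H. lra.
Qed.

Lemma greatest_root f x0 M : continuity f -> 0 <= f x0 -> (forall x, 0 <= f x -> x <= M) ->
  exists xs, x0 <= xs /\ f xs = 0 /\ greatest (fun x => 0 <= f x) xs.
Proof.
  intros Hc H0 Hbd.
  destruct (completeness (fun x => 0 <= f x)) as [xs [Hub Hlub]];
    [exists M; exact Hbd | exists x0; exact H0 |].
  assert (Hroot : f xs = 0).
  { destruct (Rtotal_order (f xs) 0) as [Hneg|[Hz|Hpos]]; [|exact Hz|].
    - destruct (continuity_pos_near (fun x => - f x) xs
                  (continuity_opp f Hc) ltac:(lra)) as [d [Hd Hnear]].
      enough (xs <= xs - d / 2) by lra.
      apply Hlub. intros x Hx. apply Rnot_lt_le. intro Hlt.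
      assert (x <= xs) by (apply Hub; exact Hx).
      assert (0 < - f x) by (apply Hnear; rewrite Rabs_left1 by lra; lra). lra.
    - destruct (continuity_pos_near f xs Hc Hpos) as [d [Hd Hnear]].
      enough (xs + d / 2 <= xs) by lra.
      apply Hub. left. apply Hnear. rewrite Rabs_right by lra. lra. }
  exists xs. repeat split; [apply Hub, H0 | exact Hroot | lra | exact Hub].
Qed.

Lemma exp_ge_sqr_div_4 t : 0 <= t -> t ^ 2 / 4 <= exp t.
Proof.
  intro Ht. assert (H := exp_ineq1_le (t / 2)).
  replace (exp t) with (exp (t / 2) * exp (t / 2))
    by (rewrite <- exp_plus; f_equal; field).
  nra.
Qed.

Definition lin_exp_gap (al be ka la K x : R) : R := al * x - be - ka * exp (la * (x - K)).

Section LinExpGap.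
Variables (al be ka la K : R).
Hypotheses (Hka : 0 < ka) (Hla : 0 < la).

(* Beyond K + Z, exp t >= t^2/4 makes the exponential term beat the affine one. *)
Lemma lin_exp_gap_bounded : exists M, forall x, 0 <= lin_exp_gap al be ka la K x -> x <= M.
Proof.
  set (c := Rabs al + Rabs (al * K - be)).
  set (Z := 4 * c / (ka * la ^ 2) + 1).
  assert (Hkl : 0 < ka * la ^ 2) by (apply Rmult_lt_0_compat; [lra | apply pow_lt; lra]).
  assert (Hc : 0 <= c)
    by (pose proof (Rabs_pos al); pose proof (Rabs_pos (al * K - be)); unfold c; lra).
  assert (HZ : 4 * c = ka * la ^ 2 * (Z - 1)) by (unfold Z; field; lra).
  assert (HZ1 : 1 <= Z).
  { assert (0 <= 4 * c / (ka * la ^ 2))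
      by (apply Rmult_le_pos; [lra | left; apply Rinv_0_lt_compat; lra]).
    unfold Z. lra. }
  exists (K + Z). intros x Hx. apply Rnot_lt_le. intro Hlt.
  assert (Hz : Z < x - K) by lra.
  unfold lin_exp_gap in Hx. set (z := x - K) in *.
  assert (Hexp : ka * (la ^ 2 * z * z / 4) <= ka * exp (la * z)).
  { apply Rmult_le_compat_l; [lra|].
    replace (la ^ 2 * z * z / 4) with ((la * z) ^ 2 / 4) by field.
    apply exp_ge_sqr_div_4. nra. }
  assert (Haff : al * x - be <= c * z).
  { replace (al * x - be) with (al * z + (al * K - be)) by (unfold z; ring).
    assert (al * z <= Rabs al * z) by (apply Rmult_le_compat_r; [lra | apply Rle_abs]).
    assert (al * K - be <= Rabs (al * K - be) * z)
      by (pose proof (Rle_abs (al * K - be)); pose proof (Rabs_pos (al * K - be)); nra).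
    unfold c. lra. }
  assert (Hcz : 4 * c * z < ka * la ^ 2 * z * z).
  { rewrite HZ. assert (0 < ka * la ^ 2 * ((z - (Z - 1)) * z))
      by (apply Rmult_lt_0_compat; [lra | apply Rmult_lt_0_compat; lra]).
    nra. }
  nra.
Qed.

Lemma lin_exp_gap_last_root x0 : 0 <= lin_exp_gap al be ka la K x0 ->
  exists xs, x0 <= xs /\ lin_exp_gap al be ka la K xs = 0
    /\ greatest (fun x => 0 <= lin_exp_gap al be ka la K x) xs.
Proof.
  intro H0. destruct lin_exp_gap_bounded as [M HM].
  apply (greatest_root _ x0 M); [unfold lin_exp_gap; reg | exact H0 | exact HM].
Qed.
End LinExpGap.

Lemma is_lub_exp_greatest R0 xs (P Q : R -> Prop) : 0 < R0 ->
  (forall x, P (R0 * exp x) <-> Q x) -> greatest Q xs ->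
  is_lub (fun r => 0 < r /\ P r) (R0 * exp xs).
Proof.
  intros HR0 HPQ [Hxs Hmax]. split.
  - intros r [Hr HPr].
    assert (Er : r = R0 * exp (ln (r / R0)))
      by (rewrite exp_ln by (apply Rdiv_lt_0_compat; lra); field; lra).
    rewrite Er in HPr |- *. apply HPQ, Hmax in HPr.
    apply Rmult_le_compat_l; [lra|].
    destruct HPr as [Hlt| ->]; [left; apply exp_increasing, Hlt | right; reflexivity].
  - intros ub Hub. apply Hub. split.
    + apply Rmult_lt_0_compat; [lra | apply exp_pos].
    + apply HPQ, Hxs.
Qed.

Lemma exists_log_scale L b la K : 0 < L -> 0 < b -> 0 < la ->
  exists R0, 0 < R0 /\ L * Rpower R0 la = b * exp (- la * K).
Proof.
  intros HL Hb Hla. exists (Rpower (b * exp (- la * K) / L) (/ la)). split.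
  - apply exp_pos.
  - assert (0 < b * exp (- la * K) / L)
      by (apply Rdiv_lt_0_compat; [apply Rmult_lt_0_compat; [lra | apply exp_pos] | lra]).
    rewrite Rpower_mult, Rinv_l, Rpower_1 by lra. field. lra.
Qed.

Lemma log_profile_nonpos_iff m l L b R0 K ka al be k x : 0 < b -> 0 < R0 ->
  L * Rpower R0 (l - m) = b * exp (- (l - m) * K) ->
  let r := R0 * exp x in
  ka * L * Rpower r (- m - k) - (al * ln (r / R0) - be) * b * Rpower r (- l - k) <= 0
  <-> 0 <= lin_exp_gap al be ka (l - m) K x.
Proof.
  intros Hb HR0 Hscale r.
  assert (Hln : ln (r / R0) = x)
    by (unfold r; replace (R0 * exp x / R0) with (exp x) by (field; lra); apply ln_exp).
  assert (Hpow : L * Rpower r (l - m) = b * exp ((l - m) * (x - K))).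
  { unfold r. rewrite <- Rpower_mult_distr, <- Rmult_assoc, Hscale by (try apply exp_pos; lra).
    unfold Rpower at 1. rewrite ln_exp, Rmult_assoc, <- exp_plus. do 2 f_equal. ring. }
  assert (Hsplit : Rpower r (- m - k) = Rpower r (- l - k) * Rpower r (l - m))
    by (rewrite <- Rpower_plus; f_equal; ring).
  assert (E : ka * L * Rpower r (- m - k) - (al * ln (r / R0) - be) * b * Rpower r (- l - k)
              = - (b * Rpower r (- l - k)) * lin_exp_gap al be ka (l - m) K x).
  { rewrite Hsplit, Hln. unfold lin_exp_gap.
    transitivity (ka * (L * Rpower r (l - m)) * Rpower r (- l - k)
                  - (al * x - be) * b * Rpower r (- l - k)); [ring | rewrite Hpow; ring]. }
  assert (Hc : 0 < b * Rpower r (- l - k)) by (apply Rmult_lt_0_compat; [lra | apply exp_pos]).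
  rewrite E. split; intro H; nra.
Qed.

Section OutProfiles.
Variables (N l b R0 K : R).
Hypotheses (Hb : 0 < b) (HR0 : 0 < R0)
  (Hscale : Lconst N * Rpower R0 (l - mexp N) = b * exp (- (l - mexp N) * K)).
Let m := mexp N.

Lemma u_out_nonpos_iff x : u_out N l b R0 (R0 * exp x) <= 0
  <-> 0 <= lin_exp_gap 1 0 1 (l - m) K x.
Proof.
  rewrite <- (log_profile_nonpos_iff m l (Lconst N) b R0 K 1 1 0 0 x Hb HR0 Hscale).
  unfold u_out. rewrite !Rminus_0_r. cbv zeta. fold m. split; intro H; lra.
Qed.

Lemma v_out_nonpos_iff x : v_out N l b R0 (R0 * exp x) <= 0
  <-> 0 <= lin_exp_gap (l * (N - 2 - l)) (N - 2 - 2 * l) (m * (N - 2 - m)) (l - m) K x.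
Proof.
  rewrite <- (log_profile_nonpos_iff m l (Lconst N) b R0 K _ _ _ 2 x Hb HR0 Hscale).
  unfold v_out. cbv zeta. fold m. split; intro H; lra.
Qed.

Lemma w_out_nonpos_iff x : w_out N l b R0 (R0 * exp x) <= 0
  <-> 0 <= lin_exp_gap (l * (l + 2) * (N - 2 - l) * (N - 4 - l))
                       ((N - 2 - 2 * l) * (l + 2) * (N - 4 - l))
                       (m * (m + 2) * (N - 2 - m) * (N - 4 - m)) (l - m) K x.
Proof.
  rewrite <- (log_profile_nonpos_iff m l (Lconst N) b R0 K _ _ _ 4 x Hb HR0 Hscale).
  unfold w_out. cbv zeta. fold m. split; intro H; lra.
Qed.
End OutProfiles.

Lemma affine_pos a c x : 0 < a -> Rabs c / a < x -> 0 < a * x - c.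
Proof.
  intros Ha Hx. apply (Rmult_lt_compat_l a) in Hx; [|exact Ha].
  replace (a * (Rabs c / a)) with (Rabs c) in Hx by (field; lra).
  pose proof (Rle_abs c). lra.
Qed.

Section OrderedRoots.
Variables (N m l : R).
Hypotheses (Hm : 0 < m) (Hml : m < l) (HlmN : l + m < N - 6).
Let la := l - m.
Let A := m * (N - 2 - m).
Let B := l * (N - 2 - l).
Let C := N - 2 - 2 * l.
Let D := m * (m + 2) * (N - 2 - m) * (N - 4 - m).
Let E := l * (l + 2) * (N - 2 - l) * (N - 4 - l).
Let F := (N - 2 - 2 * l) * (l + 2) * (N - 4 - l).

Lemma A_pos : 0 < A.
Proof. unfold A. apply Rmult_lt_0_compat; lra. Qed.

Lemma D_pos : 0 < D.
Proof. unfold D. repeat apply Rmult_lt_0_compat; lra. Qed.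

Lemma B_sub_A_pos : 0 < B - A.
Proof.
  replace (B - A) with ((l - m) * (N - 2 - l - m)) by (unfold A, B; ring).
  apply Rmult_lt_0_compat; lra.
Qed.

Lemma AE_sub_DB_pos : 0 < A * E - D * B.
Proof.
  replace (A * E - D * B)
    with (m * (N - 2 - m) * (l * (N - 2 - l)) * ((l - m) * (N - 6 - l - m)))
    by (unfold A, B, D, E; ring).
  repeat apply Rmult_lt_0_compat; lra.
Qed.

Lemma v_gap_pos_at_u_root K x : exp (la * (x - K)) = x -> Rabs C / (B - A) < x ->
  0 < lin_exp_gap B C A la K x.
Proof.
  intros Hroot Hx. unfold lin_exp_gap. rewrite Hroot.
  replace (B * x - C - A * x) with ((B - A) * x - C) by ring.
  exact (affine_pos _ _ _ B_sub_A_pos Hx).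
Qed.

Lemma w_gap_pos_at_v_root K x : A * exp (la * (x - K)) = B * x - C ->
  Rabs (A * F - D * C) / (A * E - D * B) < x -> 0 < lin_exp_gap E F D la K x.
Proof.
  intros Hroot Hx. apply (Rmult_lt_reg_l A); [exact A_pos|]. rewrite Rmult_0_r.
  replace (A * lin_exp_gap E F D la K x) with ((A * E - D * B) * x - (A * F - D * C))
    by (symmetry; transitivity (A * E * x - A * F - D * (A * exp (la * (x - K))));
        [unfold lin_exp_gap; ring | rewrite Hroot; ring]).
  exact (affine_pos _ _ _ AE_sub_DB_pos Hx).
Qed.

Lemma ordered_last_roots : exists K x1 x2 x3, 0 < x1 < x2 /\ x2 < x3
  /\ greatest (fun x => 0 <= lin_exp_gap 1 0 1 la K x) x1
  /\ greatest (fun x => 0 <= lin_exp_gap B C A la K x) x2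
  /\ greatest (fun x => 0 <= lin_exp_gap E F D la K x) x3.
Proof.
  assert (Hla : 0 < la) by (unfold la; lra).
  assert (HBA := B_sub_A_pos). assert (HAE := AE_sub_DB_pos).
  set (c2 := Rabs C / (B - A)). set (c3 := Rabs (A * F - D * C) / (A * E - D * B)).
  assert (Hc2 : 0 <= c2)
    by (apply Rmult_le_pos; [apply Rabs_pos | left; apply Rinv_0_lt_compat, HBA]).
  assert (Hc3 : 0 <= c3)
    by (apply Rmult_le_pos; [apply Rabs_pos | left; apply Rinv_0_lt_compat, HAE]).
  set (K := 1 + c2 + c3). exists K.
  destruct (lin_exp_gap_last_root 1 0 1 la K Rlt_0_1 Hla K) as [x1 [HKx1 [Hx1 Hgr1]]].
  { unfold lin_exp_gap. rewrite Rminus_diag, Rmult_0_r, exp_0. unfold K. lra. }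
  unfold K in HKx1.
  assert (Hv1 : 0 < lin_exp_gap B C A la K x1)
    by (apply v_gap_pos_at_u_root; fold c2; unfold lin_exp_gap in Hx1; lra).
  destruct (lin_exp_gap_last_root B C A la K A_pos Hla x1) as [x2 [Hx12 [Hx2 Hgr2]]]; [lra|].
  assert (Hw2 : 0 < lin_exp_gap E F D la K x2)
    by (apply w_gap_pos_at_v_root; fold c3; unfold lin_exp_gap in Hx2; lra).
  destruct (lin_exp_gap_last_root E F D la K D_pos Hla x2) as [x3 [Hx23 [Hx3 Hgr3]]]; [lra|].
  assert (x1 < x2) by (destruct (Req_dec x1 x2) as [<-|]; lra).
  assert (x2 < x3) by (destruct (Req_dec x2 x3) as [<-|]; lra).
  exists x1, x2, x3. split; [lra|]. split; [lra|]. auto.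
Qed.
End OrderedRoots.

Theorem lemma4p1 (n : nat) (b lam3 : R)
  (Hn : (15 <= n)%nat) (Hb : 0 < b)
  (Hlam_pos : 0 < lam3)
  (Hlam_root : Ppoly (INR n) lam3 = 0)
  (Hlam_min : forall lam, 0 < lam < lam3 -> Ppoly (INR n) lam <> 0) :
  let l := mexp (INR n) + lam3 in
  exists R0 : R, 0 < R0 /\
    exists r1 r2 r3 : R,
      is_lub (fun r => 0 < r /\ u_out (INR n) l b R0 r <= 0) r1 /\
      is_lub (fun r => 0 < r /\ v_out (INR n) l b R0 r <= 0) r2 /\
      is_lub (fun r => 0 < r /\ w_out (INR n) l b R0 r <= 0) r3 /\
      R0 < r1 /\ r1 < r2 /\ r2 < r3.
Proof.
  intro l.
  assert (HN : 15 <= INR n) by (apply le_INR in Hn; simpl in Hn; lra).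
  set (N := INR n) in *.
  destruct (mexp_bounds N HN) as [Hm Hmid].
  assert (Hl := first_root_le_mid N lam3 HN Hlam_pos Hlam_root Hlam_min). fold l in Hl.
  destruct (ordered_last_roots N (mexp N) l)
    as (K & x1 & x2 & x3 & [Hx1 Hx12] & Hx23 & Hu & Hv & Hw);
    [lra | unfold l; lra | unfold l in *; lra |].
  destruct (exists_log_scale (Lconst N) b (l - mexp N) K) as [R0 [HR0 Hscale]];
    [unfold Lconst, Rpower; apply exp_pos | exact Hb | unfold l; lra |].
  exists R0. split; [exact HR0|].
  exists (R0 * exp x1), (R0 * exp x2), (R0 * exp x3).
  split; [exact (is_lub_exp_greatest _ _ _ _ HR0 (u_out_nonpos_iff N l b R0 K Hb HR0 Hscale) Hu)|].
  split; [exact (is_lub_exp_greatest _ _ _ _ HR0 (v_out_nonpos_iff N l b R0 K Hb HR0 Hscale) Hv)|].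
  split; [exact (is_lub_exp_greatest _ _ _ _ HR0 (w_out_nonpos_iff N l b R0 K Hb HR0 Hscale) Hw)|].
  rewrite <- (Rmult_1_r R0) at 1. rewrite <- exp_0.
  split; [|split]; apply Rmult_lt_compat_l; try apply exp_increasing; assumption.
Qed.
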